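(* Let $n,m\in\mathbb{N}$, $\beta\in\mathbb{C}$ and $u\in S(n,\beta)$ (so also $u\in S(nm,\beta)$). Suppose the representatives $\{R_j^{nm,1}\}_{j\in I_{nm}}$ of $\Gamma_0(nm)\backslash SL(2,\mathbb{Z})$ and $\{R_i^{n,1}\}_{i\in I_n}$ of $\Gamma_0(n)\backslash SL(2,\mathbb{Z})$ satisfy $R_j^{nm,1}=R_{r(j)}^{nm,n}R^{n,1}_{\sigma_{m,n}(j)}$ for all $j\in I_{nm}$, where each $R_{r(j)}^{nm,n}$ is a representative of a coset in $\Gamma_0(nm)\backslash\Gamma_0(n)$. Then $(\mathrm{P}_{nm}\Pi_{nm}u)_j=(\mathrm{P}_n\Pi_nu)_{\sigma_{m,n}(j)}$ for all $j\in I_{nm}$.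
   Context: $\Gamma_0(N)=\{\begin{pmatrix}a&b\\c&d\end{pmatrix}\in SL(2,\mathbb{Z}):N\mid c\}$. $S(N,\beta)$: Maass cusp forms for $\Gamma_0(N)$ with spectral parameter $\beta$ (real-analytic, $\Gamma_0(N)$-invariant, eigenvalue $\beta(1-\beta)$ of $-y^2(\partial_x^2+\partial_y^2)$, rapid decay in cusps). $I_N$ indexes the right cosets $\Gamma_0(N)\backslash SL(2,\mathbb{Z})$ (coset $\Gamma_0(N)\begin{pmatrix}a&b\\c&d\end{pmatrix}$ labelled by the class $[c:d]_N$ of $(c,d)$ modulo $(x,y)\sim(kx,ky)\bmod N$, $\gcd(k,N)=1$), $R_i^{N,1}$ a representative of coset $i$; $\sigma_{m,n}:I_{nm}\to I_n$ is induced by $\Gamma_0(nm)g\mapsto\Gamma_0(n)g$. $\Pi_Nu=(u(R_i^{N,1}z))_{i\in I_N}$. $R_\zeta(z)=\frac{y}{(x-\zeta)^2+y^2}$ for $z=x+iy$; $\eta(u,v)=(v\partial_yu-u\partial_yv)dx+(u\partial_xv-v\partial_xu)dy$; $(\mathrm{P}_N\vec u)_i(\zeta)=\int_0^{i\infty}\eta(u_i,R_\zeta^\beta)$. *)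

From Stdlib Require Import Reals ZArith Lia Lra Psatz.
From Stdlib Require Import FunctionalExtensionality PropExtensionality.
From Coquelicot Require Import Coquelicot.
Set Implicit Arguments.
Open Scope R_scope.

Record mat := Mat { ma : Z; mb : Z; mc : Z; md : Z }.

Definition matmul (g h : mat) : mat :=
  Mat (ma g * ma h + mb g * mc h)%Z (ma g * mb h + mb g * md h)%Z
      (mc g * ma h + md g * mc h)%Z (mc g * mb h + md g * md h)%Z.

(* adjugate = inverse for determinant-one matrices *)
Definition matinv (g : mat) : mat := Mat (md g) (- mb g)%Z (- mc g)%Z (ma g).

Definition SL2Z (g : mat) : Prop := (ma g * md g - mb g * mc g = 1)%Z.

Definition Gamma0 (N : Z) (g : mat) : Prop := SL2Z g /\ (N | mc g)%Z.

Definition coset (N : Z) (g : mat) : mat -> Prop :=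
  fun h => SL2Z h /\ Gamma0 N (matmul h (matinv g)).

(* I_N : the set of right cosets Gamma_0(N)\SL(2,Z) (the coset labelled
   [c:d]_N in the paper is the coset of any matrix with bottom row (c,d)) *)
Definition cosets (N : Z) : Type :=
  { S : mat -> Prop | exists g, SL2Z g /\ S = coset N g }.

Definition in_coset (N : Z) (i : cosets N) (g : mat) : Prop := proj1_sig i g.

Definition sigma_set (n : Z) (S : mat -> Prop) : mat -> Prop :=
  fun h => exists g, S g /\ coset n g h.

Lemma pluecker (a b c d c0 d0 ch dh : Z) :
 ((ch*d0 - dh*c0) * (c*b - d*a) =
  (ch*d - dh*c)*(c0*b - d0*a) - (ch*b - dh*a)*(c0*d - d0*c))%Z.
Proof. ring. Qed.

Lemma coset_trans (N : Z) (g0 g h : mat) :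
  SL2Z g -> (N | (mc g * md g0 - md g * mc g0))%Z ->
  (N | (mc h * md g - md h * mc g))%Z ->
  (N | (mc h * md g0 - md h * mc g0))%Z.
Proof.
  unfold SL2Z; intros Hg H1 H2.
  pose proof (pluecker (ma g) (mb g) (mc g) (md g) (mc g0) (md g0) (mc h) (md h)) as P.
  replace (mc g * mb g - md g * ma g)%Z with (-1)%Z in P by lia.
  replace (mc h * md g0 - md h * mc g0)%Z with
    (- ((mc h * md g - md h * mc g) * (mc g0 * mb g - md g0 * ma g))
     + (mc h * mb g - md h * ma g) * (mc g0 * md g - md g0 * mc g))%Z by lia.
  apply Z.divide_add_r.
  - apply Z.divide_opp_r, Z.divide_mul_l, H2.
  - apply Z.divide_mul_r.
    replace (mc g0 * md g - md g0 * mc g)%Z with (- (mc g * md g0 - md g * mc g0))%Z by ring.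
    apply Z.divide_opp_r, H1.
Qed.

Lemma sigma_set_coset (n m : Z) (g0 : mat) :
  SL2Z g0 -> sigma_set n (coset (n * m) g0) = coset n g0.
Proof.
  intro H0.
  apply functional_extensionality; intro h; apply propositional_extensionality.
  unfold sigma_set, coset, Gamma0; simpl; split.
  - intros [g [[Hg [_ Hgg]] [Hh [_ Hhg]]]]. split; [exact Hh|]. split.
    + unfold SL2Z in *; simpl; nia.
    + replace (mc h * md g0 + md h * - mc g0)%Z with (mc h * md g0 - md h * mc g0)%Z
        by ring.
      apply coset_trans with (g := g); auto.
      * destruct Hgg as [k Hk]. exists (k * m)%Z. lia.
      * replace (mc h * md g - md h * mc g)%Z with (mc h * md g + md h * - mc g)%Z
          by ring; exact Hhg.
  - intros [Hh Hhg]. exists g0. split; [|split; assumption].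
    split; [exact H0|]. split.
    + unfold SL2Z in *; simpl; nia.
    + exists 0%Z. ring.
Qed.

Definition sigma_mn (n m : Z) (j : cosets (n * m)) : cosets n.
Proof.
  refine (exist _ (sigma_set n (proj1_sig j)) _).
  destruct j as [S [g0 [H0 ->]]]; simpl.
  exists g0; split; [exact H0|]. apply sigma_set_coset; exact H0.
Defined.

Definition Re (z : C) : R := fst z.
Definition Im (z : C) : R := snd z.

Definition mobius (g : mat) (z : C) : C :=
  Cdiv (Cplus (Cmult (RtoC (IZR (ma g))) z) (RtoC (IZR (mb g))))
       (Cplus (Cmult (RtoC (IZR (mc g))) z) (RtoC (IZR (md g)))).

Definition dx (u : C -> C) : C -> C := fun z =>
  (Derive (fun t => fst (u (t, Im z))) (Re z), Derive (fun t => snd (u (t, Im z))) (Re z)).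
Definition dy (u : C -> C) : C -> C := fun z =>
  (Derive (fun t => fst (u (Re z, t))) (Im z), Derive (fun t => snd (u (Re z, t))) (Im z)).

Definition real_analytic_at (u : C -> C) (x0 y0 : R) : Prop :=
  exists r : R, 0 < r /\ exists a : nat -> nat -> C,
    forall x y : R, Rabs (x - x0) < r -> Rabs (y - y0) < r ->
      (forall k, ex_series (fun l => Cmod (a k l) * Rabs (x - x0) ^ k * Rabs (y - y0) ^ l)) /\
      ex_series (fun k => Series (fun l => Cmod (a k l) * Rabs (x - x0) ^ k * Rabs (y - y0) ^ l)) /\
      exists s : nat -> C,
        (forall k, is_series (V := C_R_NormedModule)
                     (fun l => Cmult (a k l) (RtoC ((x - x0) ^ k * (y - y0) ^ l))) (s k)) /\
        is_series (V := C_R_NormedModule) s (u (x, y)).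

Definition maass_cusp_form (N : Z) (beta : C) (u : C -> C) : Prop :=
  (forall x y : R, 0 < y -> real_analytic_at u x y) /\
  (forall g, Gamma0 N g -> forall z : C, 0 < Im z -> u (mobius g z) = u z) /\
  (forall z : C, 0 < Im z ->
     Cmult (RtoC (- (Im z) ^ 2)) (Cplus (dx (dx u) z) (dy (dy u) z))
     = Cmult (Cmult beta (Cminus 1 beta)) (u z)) /\
  (* rapid decay in every cusp g(i oo), g in SL(2,Z) *)
  (forall g, SL2Z g -> forall k : nat, exists K Y : R, forall x y : R, Y < y ->
     Cmod (u (mobius g (x, y))) <= K / y ^ k).

(* principal branch of the argument, in (-pi, pi] *)
Definition Arg (z : C) : R :=
  let x := fst z in let y := snd z in
  if Rlt_dec 0 x then atan (y / x)
  else if Rlt_dec x 0 then (if Rle_dec 0 y then atan (y / x) + PI else atan (y / x) - PI)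
  else if Rlt_dec 0 y then PI / 2
  else if Rlt_dec y 0 then - (PI / 2) else 0.

Definition Cexp (z : C) : C := (exp (fst z) * cos (snd z), exp (fst z) * sin (snd z)).
Definition Clog (z : C) : C := (ln (Cmod z), Arg z).
Definition Cpow (z w : C) : C :=
  if Req_EM_T (Cmod z) 0 then RtoC 0 else Cexp (Cmult w (Clog z)).

Definition Rzeta (zeta : C) (z : C) : C :=
  Cdiv (RtoC (Im z))
       (Cplus (Cmult (Cminus (RtoC (Re z)) zeta) (Cminus (RtoC (Re z)) zeta))
              (RtoC (Im z ^ 2))).

(* the 1-form eta(u,v) = (v u_y - u v_y) dx + (u v_x - v u_x) dy,
   as the pair of its dx- and dy-coefficients *)
Definition eta (u v : C -> C) : (C -> C) * (C -> C) :=
  (fun z => Cminus (Cmult (v z) (dy u z)) (Cmult (u z) (dy v z)),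
   fun z => Cminus (Cmult (u z) (dx v z)) (Cmult (v z) (dx u z))).

(* integral of a 1-form along the imaginary axis from 0 to i oo,
   parametrized by t |-> (0, t), t in (0, oo) *)
Definition int_0_ioo (w : (C -> C) * (C -> C)) : C :=
  RInt_gen (V := C_R_CompleteNormedModule)
    (fun t => Cplus (Cmult (fst w (0, t)) (RtoC 0)) (Cmult (snd w (0, t)) (RtoC 1)))
    (at_right 0) (Rbar_locally p_infty).

Definition PN (N : Z) (beta : C) (v : cosets N -> C -> C) : cosets N -> C -> C :=
  fun i zeta => int_0_ioo (eta (v i) (fun z => Cpow (Rzeta zeta z) beta)).

Definition PiN (N : Z) (rep : cosets N -> mat) (u : C -> C) : cosets N -> C -> C :=
  fun i z => u (mobius (rep i) z).

Arguments sigma_mn n m j : assert.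

(* Each representative R^{nm,1}_j is R^{nm,n}_{r(j)} R^{n,1}_{σ(j)} with the left factor in
   Γ_0(n), so by Γ_0(n)-invariance of u the j-th component of Π_{nm} u coincides with the
   σ(j)-th component of Π_n u on the upper half plane.  The form η(v, R_ζ^β) on the imaginary
   axis only involves v and its partial derivatives at points of the upper half plane, and the
   latter depend only on the values of v there, because the half plane is open. *)
From Pilot Require Import Defs.
From Stdlib Require Import Reals ZArith.
From Coquelicot Require Import Coquelicot.
From Stdlib Require Import Lia Lra Psatz FunctionalExtensionality PropExtensionality.

(* [Re] and [Im] below are Coquelicot's; they are convertible to, but do not syntactically
   match, the [Defs.Re] and [Defs.Im] occurring inside [dx] and [dy]. *)

Lemma SL2Z_matmul (g h : mat) : SL2Z g -> SL2Z h -> SL2Z (matmul g h).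
Proof. unfold SL2Z; destruct g, h; simpl; intros; nia. Qed.

Lemma SL2Z_in_coset (N : Z) (i : cosets N) (g : mat) : in_coset i g -> SL2Z g.
Proof. destruct i as [S [g0 [Hg0 ->]]]; unfold in_coset; simpl; intros [Hg _]; exact Hg. Qed.

Lemma mobius_denom_sqr_gt0 (g : mat) (z : C) : SL2Z g -> 0 < Im z ->
  0 < (IZR (mc g) * Re z + IZR (md g)) ^ 2 + (IZR (mc g) * Im z) ^ 2.
Proof.
  unfold SL2Z; destruct g as [a b c d]; cbn [ma mb mc md]; intros Hdet Hy.
  destruct (Z.eq_dec c 0) as [->|Hc].
  - assert (Hd : IZR d <> 0) by (apply not_0_IZR; nia).
    apply Rplus_lt_le_0_compat; [|apply pow2_ge_0].
    rewrite <- Rsqr_pow2; apply Rlt_0_sqr; rewrite Rmult_0_l, Rplus_0_l; exact Hd.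
  - apply Rplus_le_lt_0_compat; [apply pow2_ge_0|].
    rewrite <- Rsqr_pow2; apply Rlt_0_sqr, Rmult_integral_contrapositive.
    split; [apply not_0_IZR, Hc | lra].
Qed.

Lemma mobius_denom_neq0 (g : mat) (z : C) : SL2Z g -> 0 < Im z ->
  Cplus (Cmult (RtoC (IZR (mc g))) z) (RtoC (IZR (md g))) <> 0.
Proof.
  intros Hg Hy E; pose proof (mobius_denom_sqr_gt0 g z Hg Hy) as Hpos.
  destruct z as [x y]; unfold Re, Im in *; simpl in *.
  injection E; intros Eim Ere; nra.
Qed.

Lemma Im_mobius (g : mat) (z : C) : SL2Z g -> 0 < Im z ->
  Im (mobius g z) = Im z / ((IZR (mc g) * Re z + IZR (md g)) ^ 2 + (IZR (mc g) * Im z) ^ 2).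
Proof.
  intros Hg Hy; pose proof (mobius_denom_sqr_gt0 g z Hg Hy) as Hpos.
  revert Hg Hpos; unfold SL2Z, mobius; destruct g as [a b c d], z as [x y].
  unfold Re, Im, Cdiv, Cinv, Cmult, Cplus, RtoC; cbn [fst snd ma mb mc md].
  intros Hdet Hpos; apply IZR_eq in Hdet; rewrite minus_IZR, !mult_IZR in Hdet.
  field_simplify; [|nra|nra].
  f_equal; transitivity (y * (IZR a * IZR d - IZR b * IZR c)); [ring | rewrite Hdet; ring].
Qed.

Lemma Im_mobius_gt0 (g : mat) (z : C) : SL2Z g -> 0 < Im z -> 0 < Im (mobius g z).
Proof.
  intros Hg Hy; rewrite Im_mobius by assumption.
  apply Rdiv_lt_0_compat; [exact Hy | exact (mobius_denom_sqr_gt0 g z Hg Hy)].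
Qed.

Lemma mobius_matmul (g h : mat) (z : C) : SL2Z g -> SL2Z h -> 0 < Im z ->
  mobius (matmul g h) z = mobius g (mobius h z).
Proof.
  intros Hg Hh Hy.
  pose proof (mobius_denom_neq0 h z Hh Hy) as Nh.
  pose proof (mobius_denom_neq0 (matmul g h) z (SL2Z_matmul g h Hg Hh) Hy) as Ngh.
  revert Nh Ngh; unfold mobius; destruct g as [a b c d], h as [a' b' c' d'].
  cbn [ma mb mc md matmul]; rewrite !plus_IZR, !mult_IZR, !RtoC_plus, !RtoC_mult.
  set (P := Cplus (Cmult (RtoC (IZR a')) z) (RtoC (IZR b'))).
  set (Q := Cplus (Cmult (RtoC (IZR c')) z) (RtoC (IZR d'))).
  intros NQ Ngh.
  assert (Hden : Cplus (Cmult (RtoC (IZR c)) (Cdiv P Q)) (RtoC (IZR d)) =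
    Cdiv (Cplus (Cmult (Cplus (Cmult (RtoC (IZR c)) (RtoC (IZR a')))
                              (Cmult (RtoC (IZR d)) (RtoC (IZR c')))) z)
                (Cplus (Cmult (RtoC (IZR c)) (RtoC (IZR b')))
                       (Cmult (RtoC (IZR d)) (RtoC (IZR d'))))) Q)
    by (unfold P, Q in *; field; exact NQ).
  rewrite Hden; unfold P, Q in *; field; split; assumption.
Qed.

(* Unlike Coquelicot's [RInt_gen_ext], no existence of the integral is needed: [RInt_gen] is
   [iota] of the predicate [is_RInt_gen], and that predicate is itself extensional. *)
Lemma RInt_gen_ext_filter {V : CompleteNormedModule R_AbsRing}
  {Fa Fb : (R -> Prop) -> Prop} {FFa : Filter Fa} {FFb : Filter Fb} (f g : R -> V) :
  filter_prod Fa Fb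
    (fun ab => forall x, Rmin (fst ab) (snd ab) < x < Rmax (fst ab) (snd ab) -> f x = g x) ->
  RInt_gen f Fa Fb = RInt_gen g Fa Fb.
Proof.
  intros Hfg.
  assert (Hgf : filter_prod Fa Fb
    (fun ab => forall x, Rmin (fst ab) (snd ab) < x < Rmax (fst ab) (snd ab) -> g x = f x)).
  { eapply filter_imp; [|exact Hfg]; intros ab Hab x Hx; symmetry; exact (Hab x Hx). }
  assert (Hlim : is_RInt_gen f Fa Fb = is_RInt_gen g Fa Fb).
  { apply functional_extensionality; intro l; apply propositional_extensionality.
    split; apply is_RInt_gen_ext; assumption. }
  unfold RInt_gen; rewrite Hlim; reflexivity.
Qed.

Lemma RInt_gen_right_pinfty_ext {V : CompleteNormedModule R_AbsRing} (a : R) (f g : R -> V) :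
  (forall t, a < t -> f t = g t) ->
  RInt_gen f (at_right a) (Rbar_locally p_infty) = RInt_gen g (at_right a) (Rbar_locally p_infty).
Proof.
  intros Hfg; apply RInt_gen_ext_filter.
  apply (Filter_prod _ _ _ (fun s => a < s) (fun s => a < s)).
  - exists (mkposreal 1 Rlt_0_1); intros s _ Hs; exact Hs.
  - exists a; intros s Hs; exact Hs.
  - intros s t Hs Ht x [Hx _]; apply Hfg.
    pose proof (Rmin_glb_lt s t a Hs Ht); simpl in Hx; lra.
Qed.

Definition eq_on_upper (f g : C -> C) : Prop := forall z : C, 0 < Im z -> f z = g z.

Lemma dx_eq_on_upper (f g : C -> C) : eq_on_upper f g -> eq_on_upper (dx f) (dx g).
Proof.
  intros Hfg z Hz; unfold dx.
  f_equal; apply Derive_ext; intro t; f_equal; apply Hfg, Hz.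
Qed.

Lemma dy_eq_on_upper (f g : C -> C) : eq_on_upper f g -> eq_on_upper (dy f) (dy g).
Proof.
  intros Hfg z Hz; unfold dy.
  assert (Hnear : locally (Im z) (fun t => f (Re z, t) = g (Re z, t))).
  { exists (mkposreal _ Hz); intros t Ht; apply Hfg; simpl.
    change (Rabs (t - Im z) < Im z) in Ht; apply Rabs_def2 in Ht; lra. }
  f_equal; apply Derive_ext_loc; (eapply filter_imp; [|exact Hnear]);
    intros t Ht; f_equal; exact Ht.
Qed.

Lemma int_0_ioo_eta_ext (f g v : C -> C) : eq_on_upper f g ->
  int_0_ioo (eta f v) = int_0_ioo (eta g v).
Proof.
  intros Hfg; unfold int_0_ioo, eta.
  apply (RInt_gen_right_pinfty_ext (V := C_R_CompleteNormedModule)); intros t Ht.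
  assert (Hz : 0 < Im (0, t)) by exact Ht.
  cbn [fst snd]; rewrite (Hfg _ Hz), (dx_eq_on_upper _ _ Hfg _ Hz), (dy_eq_on_upper _ _ Hfg _ Hz).
  reflexivity.
Qed.

Definition Gamma0_invariant (N : Z) (u : C -> C) : Prop :=
  forall g : mat, Gamma0 N g -> forall z : C, 0 < Im z -> u (mobius g z) = u z.

Lemma maass_cusp_form_Gamma0_invariant (N : Z) (beta : C) (u : C -> C) :
  maass_cusp_form N beta u -> Gamma0_invariant N u.
Proof. intros [_ [Hinv _]]; exact Hinv. Qed.

Lemma Gamma0_invariant_matmul_l (N : Z) (u : C -> C) (gamma g : mat) :
  Gamma0_invariant N u -> Gamma0 N gamma -> SL2Z g ->
  eq_on_upper (fun z => u (mobius (matmul gamma g) z)) (fun z => u (mobius g z)).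
Proof.
  intros Hu Hgamma Hg z Hz.
  rewrite (mobius_matmul gamma g z (proj1 Hgamma) Hg Hz).
  exact (Hu gamma Hgamma _ (Im_mobius_gt0 g z Hg Hz)).
Qed.

Theorem mainTheorem12 (n m : Z) (beta : C) (u : C -> C)
  (Hn : (0 < n)%Z) (Hm : (0 < m)%Z)
  (Hu : maass_cusp_form n beta u)
  (Rnm : cosets (n * m) -> mat) (Rn : cosets n -> mat)
  (HRnm : forall j, in_coset j (Rnm j)) (HRn : forall i, in_coset i (Rn i))
  (K : Type) (Rnmn : K -> mat) (r : cosets (n * m) -> K)
  (HRnmn : forall j, Gamma0 n (Rnmn (r j)))
  (Hfact : forall j, Rnm j = matmul (Rnmn (r j)) (Rn (sigma_mn n m j))) :
  forall (j : cosets (n * m)) (zeta : C),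
    PN beta (PiN Rnm u) j zeta = PN beta (PiN Rn u) (sigma_mn n m j) zeta.
Proof.
  intros j zeta; unfold PN, PiN.
  apply int_0_ioo_eta_ext; rewrite Hfact.
  apply Gamma0_invariant_matmul_l with (N := n).
  - exact (maass_cusp_form_Gamma0_invariant n beta u Hu).
  - exact (HRnmn j).
  - exact (SL2Z_in_coset _ _ _ (HRn (sigma_mn n m j))).
Qed.
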